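(* Let $H=(E,\{X_i:i\in[n]\})$ be a hypergraph and $t_1,\dots,t_n$ integers with $0\le t_i\le|X_i|$ satisfying: (H1) every vertex lies in at least two hyperedges; (H2) $|X_i\cap X_j|\le1$ for all distinct $i,j$; (H3) there are no $a,b,c\in E$ with $\{a,b\},\{a,c\},\{b,c\}$ all hyperedges; (T) for each $i$, either $t_i=1$ or $\min\{w(e):e\in X_i\}\le t_i<|X_i|$. Let $\rho(A)=\sum_{i=1}^n\min\{|A\cap X_i|,t_i\}$ for $A\subseteq E$. If the line graph $G_H$ is $(k+1)$-critical, then $\rho$ is an excluded minor for $\mathcal{D}_k$.
   Context: A polymatroid on a finite set $E$ is a function $\rho:2^E\to\mathbb{Z}$ that is normalized, non-decreasing and submodular. A hypergraph is $H=(E,\mathcal{E})$ with $E$ finite and $\mathcal{E}=\{X_i:i\in[n]\}$ a set of nonempty subsets of $E$; $w(e)$ is the number of hyperedges containing $e$. The line graph $G_H$ has vertex set $[n]$ with $ij$ an edge iff $i\ne j$ and $X_i\cap X_j\ne\emptyset$. A graph is $(k+1)$-critical if it has chromatic number $k+1$ but deleting any single edge gives chromatic number $k$. $\mathcal{D}_k$ is the class of polymatroids that can be written as $r_{M_1}+\cdots+r_{M_k}$ for matroids $M_1,\dots,M_k$ on the ground set. For $A\subseteq E$, the deletion $\rho_{\backslash A}$ and contraction $\rho_{/A}$ on $E-A$ are $\rho_{\backslash A}(X)=\rho(X)$ and $\rho_{/A}(X)=\rho(X\cup A)-\rho(A)$; minors are $(\rho_{\backslash A})_{/B}$ for disjoint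 $A,B$, proper if $A\cup B\ne\emptyset$. An excluded minor for a minor-closed class is a polymatroid not in the class all of whose proper minors are in the class. *)

From HB Require Import structures.
From mathcomp Require Import all_boot all_order all_algebra.
Set Implicit Arguments. Unset Strict Implicit. Unset Printing Implicit Defensive.
Import Order.TTheory GRing.Theory Num.Theory.

Local Open Scope ring_scope.

Section Defs.
Variable E : finType.

(** A set function [f] on the subsets of a ground set [S] (a subset of the
    ambient finite type [E]); values outside subsets of [S] are irrelevant. *)

Definition polymatroid (S : {set E}) (f : {set E} -> int) : Prop :=
  [/\ f set0 = 0,
      (forall X Y : {set E}, X \subset Y -> Y \subset S -> f X <= f Y) &
      (forall X Y : {set E}, X \subset S -> Y \subset S ->
          f (X :|: Y) + f (X :&: Y) <= f X + f Y)].

Definition matroid_rank (S : {set E}) (r : {set E} -> int) : Prop :=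
  [/\ (forall X : {set E}, X \subset S -> 0 <= r X /\ r X <= (#|X|)%:Z),
      (forall X Y : {set E}, X \subset Y -> Y \subset S -> r X <= r Y) &
      (forall X Y : {set E}, X \subset S -> Y \subset S ->
          r (X :|: Y) + r (X :&: Y) <= r X + r Y)].

Definition in_Dk (k : nat) (S : {set E}) (f : {set E} -> int) : Prop :=
  exists r : 'I_k -> ({set E} -> int),
    (forall i, matroid_rank S (r i)) /\
    (forall X : {set E}, X \subset S -> f X = \sum_(i < k) r i X).

(** The minor (f \ A) / B, a set function on ground set S :\: (A :|: B). *)
Definition minor (f : {set E} -> int) (A B : {set E}) : {set E} -> int :=
  fun X => f (X :|: B) - f B.

Definition excluded_minor_Dk (k : nat) (f : {set E} -> int) : Prop :=
  [/\ polymatroid [set: E] f,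
      ~ in_Dk k [set: E] f &
      (forall A B : {set E}, [disjoint A & B] -> A :|: B != set0 ->
          in_Dk k (~: (A :|: B)) (minor f A B))].

Definition hypergraph (n : nat) (X : 'I_n -> {set E}) : Prop :=
  injective X /\ (forall i, X i != set0).

Definition hdeg (n : nat) (X : 'I_n -> {set E}) (e : E) : nat :=
  #|[set i | e \in X i]|.

Definition line_graph (n : nat) (X : 'I_n -> {set E}) : rel 'I_n :=
  fun i j => (i != j) && (X i :&: X j != set0).

Definition rho_of (n : nat) (X : 'I_n -> {set E}) (t : 'I_n -> nat)
  : {set E} -> int :=
  fun A => \sum_(i < n) (minn #|A :&: X i| (t i))%:Z.

End Defs.

Definition colorable (V : finType) (G : rel V) (m : nat) : Prop :=
  exists c : V -> 'I_m, forall u v, G u v -> c u != c v.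

Definition chromatic_number_is (V : finType) (G : rel V) (m : nat) : Prop :=
  colorable G m /\ (forall j, (j < m)%N -> ~ colorable G j).

Definition delete_edge (V : finType) (G : rel V) (u v : V) : rel V :=
  fun x y => G x y && ~~ (((x == u) && (y == v)) || ((x == v) && (y == u))).

Definition critical (V : finType) (G : rel V) (k : nat) : Prop :=
  chromatic_number_is G k.+1 /\
  (forall u v, G u v -> chromatic_number_is (delete_edge G u v) k).

From HB Require Import structures.
From mathcomp Require Import all_boot all_order all_algebra zify lra.
Set Implicit Arguments. Unset Strict Implicit. Unset Printing Implicit Defensive.
Import Order.TTheory GRing.Theory Num.Theory.
Local Open Scope ring_scope.

(* rho is a sum of truncated cardinalities min(|A :&: X i|, t i), hence a polymatroid, and
   a proper minor of it is again such a sum over the hyperedges with the deleted and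
   contracted vertices removed.  If such a vertex e lies in X u and X v, a k-colouring of
   the line graph minus the edge uv makes the shrunken hyperedges of each colour class
   pairwise disjoint (by (H2) two hyperedges meet only in e), so every colour class is a
   partition matroid and the minor lies in D_k.

   Conversely, let rho = r_1 + ... + r_k.  Since t i >= 1, the total defect
   sum_j (sum_(x in A) r_j {x} - r_j A) equals sum_i (|A :&: X i| - t i)^+.  Inside a
   hyperedge with t i < |X i| this forces all the defect of X i into a single matroid c i,
   in which every t i-subset of X i spans X i.  Likewise sum_j (r_j {y} + r_j A - r_j (A + y))
   counts the hyperedges through y that A saturates.  Playing this count against the
   spanning properties of the c i shows that hyperedges which meet get different colours,
   (H2) and (H3) excluding the remaining configurations.  Singleton hyperedges are coloured
   greedily, as w(e) <= k, so the line graph would be k-colourable. *)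

Section SumsOfNonnegatives.
Variables (I : finType) (f : I -> int).
Hypothesis f_ge0 : forall i, 0 <= f i.

Lemma ler_sum_term i : f i <= \sum_j f j.
Proof. by rewrite (bigD1 i) //= lerDl sumr_ge0. Qed.

Lemma sum_le_term_eq0 i : \sum_j f j <= f i -> forall j, j != i -> f j = 0.
Proof.
rewrite (bigD1 i) //= gerDl => le0 j ji.
have rest0 : \sum_(j | j != i) f j = 0 by apply/eqP; rewrite eq_le le0 sumr_ge0.
exact: (psumr_eq0P (fun j _ => f_ge0 j) rest0).
Qed.

Lemma card_mul_le_sum (C : {set I}) m :
  (forall i, i \in C -> m <= f i) -> #|C|%:Z * m <= \sum_i f i.
Proof.
move=> Cm; rewrite (bigID (mem C)) /= -[X in X <= _]addr0 lerD ?sumr_ge0 //.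
rewrite -sum1_card (big_morph Posz PoszD (erefl _)) mulr_suml.
by apply: ler_sum => i /Cm; rewrite mul1r.
Qed.

Lemma exists_sum_gt0 : 0 < \sum_i f i -> exists i, 0 < f i.
Proof. by rewrite lt_def psumr_neq0 // => /andP[/hasP[i _ /= fi] _]; exists i. Qed.

End SumsOfNonnegatives.

Lemma exists_sum_gt_term (I : finType) (f : I -> int) i :
  (forall j, f j <= 1) -> 2 <= \sum_j f j -> exists2 j, j != i & 1 <= f j.
Proof.
move=> f_le1 sum_ge2.
have [/existsP[j /andP[ji fj]] | /existsPn none] :=
  boolP [exists j, (j != i) && (1 <= f j)]; first by exists j.
have : \sum_j f j <= f i.
  rewrite (bigD1 i) //= gerDl; apply: sumr_le0 => j ji.
  by have := none j; rewrite ji /=; lia.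
by have := f_le1 i; lra.
Qed.

Section FiniteSets.
Variable T : finType.
Implicit Types (A S U V Y Z : {set T}) (x y : T).

Lemma exists_subset_card A m :
  (m <= #|A|)%N -> exists2 S : {set T}, S \subset A & #|S| = m.
Proof.
elim: m => [|m IHm] le_mA; first by exists set0; rewrite ?sub0set ?cards0.
have [S sSA cardS] := IHm (ltnW le_mA).
have : (0 < #|A :\: S|)%N by rewrite cardsD (setIidPr sSA) cardS subn_gt0.
rewrite card_gt0 => /set0Pn[x]; rewrite inE => /andP[xNS xA].
by exists (x |: S); rewrite ?subUset ?sub1set ?xA // cardsU1 xNS cardS.
Qed.

Lemma exists_other A x : (1 < #|A|)%N -> exists2 y, y \in A & y != x.
Proof.
case/card_gt1P => [y [z [yA zA yz]]].
by case: (eqVneq y x) => [yx | ]; [exists z; rewrite // -yx eq_sym | exists y].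
Qed.

Lemma set2_card_le2 A x y : x \in A -> y \in A -> x != y -> (#|A| <= 2)%N ->
  A = [set x; y].
Proof.
move=> xA yA xy leA2; apply/eqP; rewrite eq_sym eqEcard cards2 xy leA2 andbT.
by rewrite subUset !sub1set xA yA.
Qed.

Lemma card_setI_sum A Z : #|A :&: Z| = (\sum_(x in A) (x \in Z))%N.
Proof.
rewrite -sum1_card big_mkcond [RHS]big_mkcond /=; apply: eq_bigr => x _.
by rewrite !inE; case: (x \in A); case: (x \in Z).
Qed.

Lemma card_setU1I y A Z : y \notin A -> #|(y |: A) :&: Z| = ((y \in Z) + #|A :&: Z|)%N.
Proof. by move=> yA; rewrite !card_setI_sum big_setU1. Qed.

Lemma sum_card_setI (I : finType) (P : pred I) (Y : I -> {set T}) Z :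
  (\sum_(i | P i) #|Z :&: Y i| = \sum_(x in Z) #|[set i | P i & x \in Y i]|)%N.
Proof.
under eq_bigr do rewrite card_setI_sum.
rewrite exchange_big; apply: eq_bigr => x _.
by rewrite -sum1dep_card big_mkcond [RHS]big_mkcond; apply: eq_bigr => i _; case: (P i).
Qed.

Lemma setD1U Y x y : x != y -> (Y :\ x) :|: (Y :\ y) = Y.
Proof.
move=> xy; apply/setP => z; rewrite !inE -andb_orl.
by case: eqVneq => [-> | //]; rewrite xy.
Qed.

Lemma setD1I Y x y : (Y :\ x) :&: (Y :\ y) = Y :\ x :\ y.
Proof. by apply/setP => z; rewrite !inE; case: (z == x); case: (z == y); case: (z \in Y). Qed.

Lemma sum_setUI (f : T -> int) U V :
  \sum_(x in U :|: V) f x + \sum_(x in U :&: V) f x = \sum_(x in U) f x + \sum_(x in V) f x.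
Proof.
rewrite (@big_setID _ _ _ _ (U :|: V) V) (@big_setID _ _ _ _ U V) /=.
by rewrite [(U :|: V) :&: V]setIC setKU setDUl setDv setU0; lra.
Qed.

End FiniteSets.

Lemma card_set_sum (I : finType) (P : pred I) : #|[set i | P i]| = (\sum_i P i)%N.
Proof. by rewrite -sum1dep_card big_mkcond; apply: eq_bigr => i _; case: (P i). Qed.

Section TruncatedCardinality.
Variable E : finType.
Implicit Types Y Z : {set E}.

Definition trunc_card Y (s : nat) Z : nat := minn #|Z :&: Y| s.

Lemma trunc_card_mono Y s Z Z' :
  Z \subset Z' -> (trunc_card Y s Z <= trunc_card Y s Z')%N.
Proof.
move=> sZZ'; have := subset_leq_card (setSI Y sZZ'); rewrite /trunc_card; lia.
Qed.

Lemma trunc_card_submod Y s Z Z' :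
  (trunc_card Y s (Z :|: Z') + trunc_card Y s (Z :&: Z')
     <= trunc_card Y s Z + trunc_card Y s Z')%N.
Proof.
have := cardsUI (Z :&: Y) (Z' :&: Y); rewrite -setIUl -setIIl.
have := subset_leq_card (setSI Y (subsetUl Z Z')).
have := subset_leq_card (setSI Y (subsetUr Z Z')).
rewrite /trunc_card; lia.
Qed.

Variables (I : finType) (P : pred I) (X : I -> {set E}) (s : I -> nat).

Definition sum_trunc_card Z : int := \sum_(i | P i) (trunc_card (X i) (s i) Z)%:Z.

Lemma sum_trunc_card_polymatroid S : polymatroid S sum_trunc_card.
Proof.
split.
- by apply: big1 => i _; rewrite /trunc_card set0I cards0 min0n.
- move=> Z Z' sZZ' _; apply: ler_sum => i _; rewrite lez_nat.
  exact: trunc_card_mono.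
- move=> Z Z' _ _; rewrite -!big_split /=; apply: ler_sum => i _.
  by rewrite -!PoszD lez_nat trunc_card_submod.
Qed.

Lemma sum_trunc_card_matroid S :
  {in P &, forall i j, i != j -> [disjoint X i & X j]} ->
  matroid_rank S sum_trunc_card.
Proof.
move=> disjX; have [_ mono submod] := sum_trunc_card_polymatroid S.
split=> // Z _; split; first exact: sumr_ge0.
rewrite /sum_trunc_card -(big_morph Posz PoszD (erefl _)) lez_nat.
apply: (@leq_trans (\sum_(i | P i) #|Z :&: X i|)).
  by apply: leq_sum => i _; apply: geq_minl.
rewrite sum_card_setI -[X in (_ <= X)%N]sum1_card; apply: leq_sum => x _.
apply/card_le1_eqP => i j; rewrite !inE => /andP[Pi xi] /andP[Pj xj].
apply/eqP/negPn/negP => ij.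
by rewrite (disjointFr (disjX j i Pj Pi ij) xj) in xi.
Qed.

End TruncatedCardinality.

Lemma polymatroid_rho_of (E : finType) n (X : 'I_n -> {set E}) t :
  polymatroid [set: E] (rho_of X t).
Proof. exact: sum_trunc_card_polymatroid. Qed.

Lemma in_Dk_sum_trunc_card (E : finType) n k (Y : 'I_n -> {set E}) s
    (col : 'I_n -> 'I_k) S :
  (forall i j, i != j -> col i = col j -> [disjoint Y i & Y j]) ->
  in_Dk k S (sum_trunc_card xpredT Y s).
Proof.
move=> disjY; exists (fun c => sum_trunc_card (fun i => col i == c) Y s); split.
  move=> c; apply: sum_trunc_card_matroid => i j /eqP ci /eqP cj ij.
  by apply: disjY; rewrite // ci cj.
by move=> Z _; rewrite /sum_trunc_card (partition_big col xpredT).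
Qed.

Lemma eq_in_Dk (E : finType) (k : nat) (S : {set E}) (f g : {set E} -> int) :
  (forall Z : {set E}, Z \subset S -> f Z = g Z) -> in_Dk k S f -> in_Dk k S g.
Proof. by move=> fg [r [rk fr]]; exists r; split=> // Z sZS; rewrite -fg ?fr. Qed.

Section Hypergraph.
Variables (E : finType) (n : nat) (X : 'I_n -> {set E}) (t : 'I_n -> nat).
Implicit Types (A B Z : {set E}) (x y e : E).
Hypothesis meet_le1 : forall i j, i != j -> (#|X i :&: X j| <= 1)%N.

Lemma edge_of_pair_unique x y i j : x != y ->
  x \in X i -> y \in X i -> x \in X j -> y \in X j -> i = j.
Proof.
move=> xy xi yi xj yj; apply/eqP/negPn/negP => /meet_le1.
by rewrite leqNgt; case/negP; apply/card_gt1P; exists x, y; rewrite !inE xi yi xj yj.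
Qed.

Lemma edge_meet_le1 i j A : i != j -> A \subset X i -> (#|A :&: X j| <= 1)%N.
Proof. by move=> ij sA; apply: leq_trans (meet_le1 ij); apply/subset_leq_card/setSI. Qed.

(* The subtraction [t i - #|B :&: X i|] is truncated: the term vanishes once B
   saturates X i. *)
Lemma minor_rho_of A B Z : Z \subset ~: (A :|: B) ->
  minor (rho_of X t) A B Z =
  sum_trunc_card xpredT (fun i => X i :\: (A :|: B)) (fun i => t i - #|B :&: X i|)%N Z.
Proof.
rewrite -disjoints_subset => dZAB; rewrite /minor /rho_of -sumrB.
apply: eq_bigr => i _; rewrite /trunc_card.
have -> : Z :&: (X i :\: (A :|: B)) = Z :&: X i.
  apply/setP => x; rewrite !in_setI in_setD.
  by case xZ: (x \in Z); rewrite //= (disjointFr dZAB xZ).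
have -> : #|(Z :|: B) :&: X i| = (#|Z :&: X i| + #|B :&: X i|)%N.
  have disjZB : (Z :&: X i) :&: (B :&: X i) = set0.
    apply/setP => x; rewrite !inE; case xZ: (x \in Z) => //=.
    by move/negbT: (disjointFr dZAB xZ); rewrite !inE => /norP[_ /negbTE->]; rewrite andbF.
  by rewrite setIUl cardsU disjZB cards0 subn0.
by apply/eqP; rewrite subr_eq -PoszD; apply/eqP; congr Posz; lia.
Qed.

Lemma same_colour_meet_sub u v e (k : nat) (col : 'I_n -> 'I_k) i j :
  e \in X u -> e \in X v ->
  (forall a b, delete_edge (line_graph X) u v a b -> col a != col b) ->
  i != j -> col i = col j -> X i :&: X j \subset [set e].
Proof.
move=> eu ev proper ij cij; apply/subsetP => x; rewrite !inE => /andP[xi xj].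
have : ~~ delete_edge (line_graph X) u v i j by apply/negP => /proper; rewrite cij eqxx.
rewrite /delete_edge /line_graph ij; case: set0Pn => [_ /= | []]; last by exists x; rewrite inE xi.
rewrite negbK => uv_ij; apply: contraNT ij => xe.
have [ei ej] : e \in X i /\ e \in X j by case/orP: uv_ij => /andP[/eqP-> /eqP->].
by rewrite (edge_of_pair_unique xe xi ei xj ej).
Qed.

Hypothesis deg_ge2 : forall e, (2 <= hdeg X e)%N.

Lemma minor_rho_of_in_Dk (k : nat) A B :
  (forall u v, line_graph X u v -> colorable (delete_edge (line_graph X) u v) k) ->
  A :|: B != set0 -> in_Dk k (~: (A :|: B)) (minor (rho_of X t) A B).
Proof.
move=> crit /set0Pn[e eAB].
have /card_gt1P[u [v [eu ev uv]]] := deg_ge2 e; rewrite !inE in eu ev.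
have [col proper] : colorable (delete_edge (line_graph X) u v) k.
  by apply: crit; rewrite /line_graph uv; apply/set0Pn; exists e; rewrite inE eu ev.
apply: eq_in_Dk (fun Z sZ => esym (minor_rho_of sZ)) _.
apply: (@in_Dk_sum_trunc_card _ _ _ _ _ col) => i j ij cij /=.
rewrite -setI_eq0; apply/eqP/setP => x; rewrite in_set0 in_setI !in_setD.
apply/negbTE/negP => /and3P[/andP[xNAB xi] _ xj].
have /subsetP/(_ x) := same_colour_meet_sub eu ev proper ij cij.
by rewrite !inE xi xj => /(_ isT)/eqP xe; rewrite xe eAB in xNAB.
Qed.

End Hypergraph.

Lemma colorable_extend (V : finType) (G : rel V) (k : nat) (P : pred V) (c : V -> 'I_k) :
  symmetric G -> (forall u v, G u v -> P u -> P v -> c u != c v) ->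
  (forall u v, G u v -> P u || P v) -> (forall u, ~~ P u -> (#|[set v | G u v]| < k)%N) ->
  colorable G k.
Proof.
move=> Gsym cP indep deg.
have [col colP] : exists col : V -> 'I_k, forall u,
    (P u -> col u = c u) /\ (~~ P u -> col u \notin c @: [set v | G u v]).
  apply: (@fin_all_exists _ (fun=> 'I_k)
    (fun u cu => (P u -> cu = c u) /\ (~~ P u -> cu \notin c @: [set v | G u v]))) => u.
  have [Pu | NPu] := boolP (P u); first by exists (c u).
  have : (0 < #|~: (c @: [set v | G u v])|)%N.
    by rewrite cardsCs setCK card_ord subn_gt0 (leq_ltn_trans (leq_imset_card _ _) (deg u NPu)).
  by rewrite card_gt0 => /set0Pn[cu]; rewrite inE => cuN; exists cu; split=> // /negP.
have away u v : G u v -> ~~ P u -> col u != c v.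
  move=> Guv NPu; apply: contraNneq ((colP u).2 NPu) => ->.
  by apply/imsetP; exists v; rewrite ?inE.
exists col => u v Guv.
have [Pu | NPu] := boolP (P u); have [Pv | NPv] := boolP (P v).
- by rewrite (colP u).1 // (colP v).1 //; apply: cP.
- by rewrite (colP u).1 // eq_sym; apply: away; rewrite // Gsym.
- by rewrite (colP v).1 //; apply: away.
- by have := indep u v Guv; rewrite (negbTE NPu) (negbTE NPv).
Qed.

Section MatroidRank.
Variables (E : finType) (r : {set E} -> int).
Hypothesis rank_r : matroid_rank [set: E] r.
Implicit Types (A B D U V W : {set E}) (x y z : E).

Lemma rank_ge0 A : 0 <= r A.
Proof. by case: rank_r => bound _ _; case: (bound A (subsetT A)). Qed.

Lemma rank_le_card A : r A <= #|A|%:Z.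
Proof. by case: rank_r => bound _ _; case: (bound A (subsetT A)). Qed.

Lemma rank_mono A B : A \subset B -> r A <= r B.
Proof. by case: rank_r => _ mono _ sAB; apply: mono; rewrite ?subsetT. Qed.

Lemma rank_submod A B : r (A :|: B) + r (A :&: B) <= r A + r B.
Proof. by case: rank_r => _ _ submod; apply: submod; rewrite subsetT. Qed.

Lemma rank_set1_le1 x : r [set x] <= 1.
Proof. by have := rank_le_card [set x]; rewrite cards1. Qed.

Lemma rank_set0 : r set0 = 0.
Proof.
by apply/eqP; rewrite eq_le rank_ge0 andbT; have := rank_le_card set0; rewrite cards0.
Qed.

(* Local connectivity of {y} and A in Oxley's notation: it is 1 exactly when y is a
   non-loop spanned by A, and 0 otherwise. *)
Definition lconn y A := r [set y] + r A - r (y |: A).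

Lemma lconn_ge0 y A : 0 <= lconn y A.
Proof.
by have := rank_submod [set y] A; have := rank_ge0 ([set y] :&: A); rewrite /lconn; lra.
Qed.

Lemma lconn_le_rank y A : lconn y A <= r [set y].
Proof. by have := rank_mono (subsetUr [set y] A); rewrite /lconn; lra. Qed.

Lemma lconn_le1 y A : lconn y A <= 1.
Proof. exact: le_trans (lconn_le_rank y A) (rank_set1_le1 y). Qed.

Lemma lconn_mono y A B : A \subset B -> lconn y A <= lconn y B.
Proof.
move=> sAB; have := rank_submod (y |: A) B.
have -> : (y |: A) :|: B = y |: B by rewrite -setUA (setUidPr sAB).
have := rank_mono (subsetIr A B); rewrite (setIidPl sAB).
have := rank_mono (setSI B (subsetUr [set y] A)); rewrite (setIidPl sAB).
by rewrite /lconn; lra.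
Qed.

Lemma lconn_eq1_mono y A B : A \subset B -> lconn y A = 1 -> lconn y B = 1.
Proof. by move=> sAB yA; apply/eqP; rewrite eq_le lconn_le1 -{1}yA lconn_mono. Qed.

Lemma lconn_trans x y A : lconn x A = 1 -> lconn y (x |: A) = 1 -> lconn y A = 1.
Proof.
move=> xA yxA; apply/eqP; rewrite eq_le lconn_le1 /=.
have := rank_mono (subsetUr [set y] A); have := rank_mono (subsetUr [set x] A).
have := rank_mono (setUS [set y] (subsetUr [set x] A)).
have := rank_set1_le1 x; have := rank_set1_le1 y.
by move: xA yxA; rewrite /lconn; lra.
Qed.

Lemma lconn_submod y U V :
  lconn y U + lconn y V + r (U :|: V) + r (U :&: V)
    <= r [set y] + lconn y (U :&: V) + r U + r V.
Proof.
have := rank_submod (y |: U) (y |: V); rewrite -setUUr -setUIr.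
have := rank_mono (subsetUr [set y] (U :|: V)).
by rewrite /lconn; lra.
Qed.

Lemma lconn_set1C x y : lconn y [set x] = lconn x [set y].
Proof. by rewrite /lconn setUC; lra. Qed.

Definition parallel x y := lconn y [set x] = 1.

Lemma parallel_sym x y : parallel x y -> parallel y x.
Proof. by rewrite /parallel lconn_set1C. Qed.

Lemma parallel_trans x y z : parallel x y -> parallel y z -> parallel x z.
Proof.
by move=> pxy pyz; apply: (lconn_trans pxy); apply: lconn_eq1_mono pyz; apply: subsetUl.
Qed.

(* For a loopless matroid this is the nullity of A. *)
Definition defect A := \sum_(x in A) r [set x] - r A.

Lemma defect_set0 : defect set0 = 0.
Proof. by rewrite /defect big_set0 rank_set0 subr0. Qed.

Lemma defect_setU1 y A : y \notin A -> defect (y |: A) = defect A + lconn y A.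
Proof. by move=> yA; rewrite /defect /lconn big_setU1 //=; lra. Qed.

Lemma defect_ge0 A : 0 <= defect A.
Proof.
elim: {A}#|A| {-2}A (erefl #|A|) => [|m IHm] A cardA.
  by rewrite (cards0_eq cardA) defect_set0.
have /set0Pn[x xA] : A != set0 by rewrite -card_gt0 cardA.
rewrite -(setD1K xA) defect_setU1 ?setD11 //.
have cardAx : #|A :\ x| = m by move: cardA; rewrite (cardsD1 x A) xA => -[].
by have := lconn_ge0 x (A :\ x); have := IHm _ cardAx; lra.
Qed.

Lemma defect_supermod A B : defect A + defect B <= defect (A :|: B) + defect (A :&: B).
Proof.
by have := rank_submod A B; have := sum_setUI (fun x => r [set x]) A B; rewrite /defect; lra.
Qed.

Lemma defect_mono A B : A \subset B -> defect A <= defect B.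
Proof.
move=> sAB; have := defect_supermod A (B :\: A); have := defect_ge0 (B :\: A).
have -> : A :|: B :\: A = B by rewrite setUC -{2}(setID B A) (setIidPr sAB) setUC.
have -> : A :&: (B :\: A) = set0 by rewrite setIDA setDIl setDv set0I.
by rewrite defect_set0; lra.
Qed.

Lemma defect_parallel_class W :
  {in W &, forall x y, x != y -> parallel x y} -> defect W = (#|W| - 1)%N%:Z.
Proof.
elim: {W}#|W| {-2}W (erefl #|W|) => [|m IHm] W cardW parW.
  by rewrite (cards0_eq cardW) defect_set0 cards0.
have /set0Pn[x xW] : W != set0 by rewrite -card_gt0 cardW.
have cardWx : #|W :\ x| = m by move: cardW; rewrite (cardsD1 x W) xW => -[].
have parWx : {in W :\ x &, forall y z, y != z -> parallel y z}.
  by move=> y z /setD1P[_ yW] /setD1P[_ zW]; apply: parW.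
rewrite -{1}(setD1K xW) defect_setU1 ?setD11 // IHm // cardWx cardW.
have [Wx0 | /set0Pn[y /setD1P[yx yW]]] := eqVneq (W :\ x) set0.
  by move: cardWx; rewrite Wx0 cards0 /lconn setU0 rank_set0 => <-; lra.
have : lconn x [set y] <= lconn x (W :\ x) by apply: lconn_mono; rewrite sub1set; apply/setD1P.
have := lconn_le1 x (W :\ x); rewrite (parW y x yW xW yx).
have : (0 < m)%N by rewrite -cardWx card_gt0; apply/set0Pn; exists y; apply/setD1P.
lia.
Qed.

Lemma lconn_free_submod y U V : defect (U :|: V) = 0 ->
  lconn y U + lconn y V <= r [set y] + lconn y (U :&: V).
Proof.
move=> freeUV; have free D : D \subset U :|: V -> defect D = 0.
  by move=> sD; apply/eqP; rewrite eq_le defect_ge0 andbT -freeUV defect_mono.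
have := free _ (subsetUl U V); have := free _ (subsetUr U V).
have := free _ (subset_trans (subsetIl U V) (subsetUl U V)).
have := lconn_submod y U V; have := sum_setUI (fun x => r [set x]) U V.
by move: freeUV; rewrite /defect; lra.
Qed.

End MatroidRank.

Definition no_pair_triangle (E : finType) n (X : 'I_n -> {set E}) : Prop :=
  ~ (exists a b d : E, [/\ a != b, a != d, b != d &
      [/\ exists i, X i = [set a; b], exists i, X i = [set a; d] & exists i, X i = [set b; d]]]).

Section RhoAsSumOfRanks.
Variables (E : finType) (n k : nat) (X : 'I_n -> {set E}) (t : 'I_n -> nat).
Variable r : 'I_k -> {set E} -> int.
Hypothesis rank_r : forall j, matroid_rank [set: E] (r j).
Hypothesis rho_sum : forall A, rho_of X t A = \sum_j r j A.
Hypothesis t_gt0 : forall i, (0 < t i)%N.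
Hypothesis meet_le1 : forall i j, i != j -> (#|X i :&: X j| <= 1)%N.
Implicit Types (A S T Y : {set E}) (x y : E).

Lemma rho_of_set1 x : rho_of X t [set x] = (hdeg X x)%:Z.
Proof.
rewrite /hdeg card_set_sum (big_morph Posz PoszD (erefl _)); apply: eq_bigr => i _.
by rewrite /trunc_card card_setI_sum big_set1; have := t_gt0 i; case: (x \in X i); lia.
Qed.

Lemma hdeg_le x : (hdeg X x <= k)%N.
Proof.
rewrite -lez_nat -rho_of_set1 rho_sum.
apply: le_trans (ler_sum _ (fun j _ => rank_set1_le1 (rank_r j) x)) _.
by rewrite sumr_const card_ord natz.
Qed.

Definition excess A : int := \sum_i (#|A :&: X i| - t i)%N%:Z.

Lemma sum_defect A : \sum_j defect (r j) A = excess A.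
Proof.
rewrite /defect sumrB exchange_big /=.
under eq_bigr do rewrite -rho_sum rho_of_set1.
rewrite -rho_sum -(big_morph Posz PoszD (erefl _)) /hdeg.
rewrite -(sum_card_setI xpredT) (big_morph Posz PoszD (erefl _)) /rho_of -sumrB.
by apply: eq_bigr => i _; rewrite /trunc_card; lia.
Qed.

Lemma defect_le_excess j A : defect (r j) A <= excess A.
Proof. by rewrite -sum_defect; apply: (ler_sum_term (fun j' => defect_ge0 (rank_r j') A)). Qed.

Lemma excess_sub_edge i A : A \subset X i -> excess A = (#|A| - t i)%N%:Z.
Proof.
move=> sAXi; rewrite /excess (bigD1 i) //= (setIidPl sAXi) big1 ?addr0 // => m mi.
have := subset_leq_card (setSI (X m) sAXi); rewrite eq_sym in mi.
by have := meet_le1 mi; have := t_gt0 m; lia.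
Qed.

Definition saturating y A := [set i | (y \in X i) && (t i <= #|A :&: X i|)%N].

Lemma sum_lconn y A : y \notin A -> \sum_j lconn (r j) y A = #|saturating y A|%:Z.
Proof.
move=> yA.
have -> : \sum_j lconn (r j) y A = \sum_j defect (r j) (y |: A) - \sum_j defect (r j) A.
  by rewrite -sumrB; apply: eq_bigr => j _; rewrite defect_setU1 //; lra.
rewrite !sum_defect /excess -sumrB card_set_sum (big_morph Posz PoszD (erefl _)).
apply: eq_bigr => i _; rewrite card_setU1I //.
by case: (y \in X i); case: leqP; lia.
Qed.

Lemma card_saturating_le y A : y \notin A -> (#|saturating y A| <= #|A|)%N.
Proof.
move=> yA; rewrite -sum1_card.
apply: (@leq_trans (\sum_(i in saturating y A) #|A :&: X i|)).
  by apply: leq_sum => i; rewrite inE => /andP[_]; have := t_gt0 i; lia.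
rewrite sum_card_setI -[X in (_ <= X)%N]sum1_card; apply: leq_sum => x xA.
apply/card_le1_eqP => i j; rewrite !inE => /andP[/andP[yi _] xi] /andP[/andP[yj _] xj].
by apply: (edge_of_pair_unique meet_le1 (x := x) (y := y)) => //; apply: contraNneq yA => <-.
Qed.

Lemma parallel_edge j x y : x != y -> parallel (r j) x y ->
  exists L, [/\ t L = 1%N, x \in X L & y \in X L].
Proof.
move=> xy pxy; have yx : y \notin [set x] by rewrite inE eq_sym.
have : (0 < #|saturating y [set x]|)%N.
  rewrite -ltz_nat -sum_lconn // (lt_le_trans _ (ler_sum_term _ j)) ?pxy //.
  by move=> j'; apply: lconn_ge0.
rewrite card_gt0 => /set0Pn[L]; rewrite inE => /andP[yL tL].
have := subset_leq_card (subsetIl [set x] (X L)); rewrite cards1 => le1.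
have /set0Pn[x'] : [set x] :&: X L != set0 by rewrite -card_gt0 (leq_trans (t_gt0 L)).
by rewrite !inE => /andP[/eqP-> xL]; exists L; split=> //; have := t_gt0 L; lia.
Qed.

Lemma parallel_colour_unique j j' x y : x != y ->
  parallel (r j) x y -> parallel (r j') x y -> j = j'.
Proof.
move=> xy pj pj'; apply/eqP/negPn/negP => jj'.
have yx : y \notin [set x] by rewrite inE eq_sym.
have ge1 i : i \in [set j; j'] -> 1 <= lconn (r i) y [set x].
  by rewrite !inE => /orP[] /eqP->; rewrite ?pj ?pj'.
have := card_mul_le_sum (fun i => lconn_ge0 (rank_r i) y [set x]) ge1.
rewrite sum_lconn // cards2 jj' mulr1 lez_nat.
by move/leq_trans/(_ (card_saturating_le yx)); rewrite cards1.
Qed.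

Lemma parallel_other_lconn0 j j' x y : x != y -> parallel (r j) x y -> j' != j ->
  lconn (r j') y [set x] = 0.
Proof.
move=> xy pj; have yx : y \notin [set x] by rewrite inE eq_sym.
apply: (sum_le_term_eq0 (fun j => lconn_ge0 (rank_r j) y [set x])).
by rewrite sum_lconn // pj -[1]/(1%:Z) lez_nat -(cards1 x) card_saturating_le.
Qed.

Lemma pair_other_colour j L x x' z : x != x' -> x \in X L -> x' \in X L ->
  z \notin X L -> parallel (r j) z x -> parallel (r j) z x' ->
  exists2 j', j' != j & 1 <= lconn (r j') z [set x; x'].
Proof.
move=> xx' xL x'L zL pzx pzx'.
have zx w : w \in X L -> w != z by move=> wL; apply: contraNneq zL => <-.
have zxx' : z \notin [set x; x'] by rewrite !inE negb_or !(eq_sym z) !zx.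
have [Lx [tLx xLx zLx]] := parallel_edge (zx x xL) (parallel_sym pzx).
have [Lx' [tLx' x'Lx' zLx']] := parallel_edge (zx x' x'L) (parallel_sym pzx').
have LxLx' : Lx != Lx'.
  apply: contraNneq zL => eqL; rewrite -eqL in x'Lx'.
  by rewrite -(edge_of_pair_unique meet_le1 xx' xLx x'Lx' xL x'L).
apply: (@exists_sum_gt_term _ (fun j => lconn (r j) z [set x; x'])) => [j'|].
  exact: lconn_le1.
have : [set Lx; Lx'] \subset saturating z [set x; x'].
  apply/subsetP => m; rewrite !inE => /orP[] /eqP->.
    by rewrite zLx tLx card_gt0; apply/set0Pn; exists x; rewrite !inE eqxx xLx.
  by rewrite zLx' tLx' card_gt0; apply/set0Pn; exists x'; rewrite !inE eqxx x'Lx' orbT.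
by move/subset_leq_card; rewrite sum_lconn // cards2 LxLx' -lez_nat.
Qed.

(* In colour j the three points of W are parallel, so W carries its whole excess 2 there and
   is independent in every other colour.  With z, each pair in W lies in two different
   hyperedges with t = 1, so some other colour spans z by that pair.  These colours are
   pairwise distinct, so together with j they make sum_j lconn z W >= 4 > #|W|. *)
Section ParallelClassMeetingAnEdge.
Variables (j : 'I_k) (L : 'I_n) (W : {set E}) (z : E).
Hypotheses (tL : t L = 1%N) (sWL : W \subset X L) (cardW : #|W| = 3).
Hypotheses (zL : z \notin X L) (parW : {in W, forall x, parallel (r j) z x}).

Let zNW : z \notin W. Proof. by apply: contraNN zL => /(subsetP sWL). Qed.

Let free_other j' : j' != j -> defect (r j') W = 0.
Proof.
apply: (sum_le_term_eq0 (fun j => defect_ge0 (rank_r j) W)).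
rewrite sum_defect (excess_sub_edge sWL) (defect_parallel_class (rank_r j)) ?cardW ?tL //.
by move=> x y xW yW _; have := parallel_trans (rank_r j) (parallel_sym (parW xW)) (parW yW).
Qed.

Let other_colour w : w \in W -> exists2 j', j' != j & 1 <= lconn (r j') z (W :\ w).
Proof.
move=> wW; have /cards2P[x [x' [xx' Ww]]] : #|W :\ w| == 2.
  by move: cardW; rewrite (cardsD1 w) wW add1n => -[->].
have [xW x'W] : x \in W /\ x' \in W.
  by split; apply: (subsetP (subD1set W w)); rewrite Ww !inE eqxx ?orbT.
rewrite Ww; apply: (pair_other_colour xx' (subsetP sWL x xW) (subsetP sWL x' x'W) zL).
  exact: parW.
exact: parW.
Qed.

Let other_colour_inj w w' j' : w \in W -> w' \in W -> w != w' -> j' != j ->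
  1 <= lconn (r j') z (W :\ w) -> 1 <= lconn (r j') z (W :\ w') -> False.
Proof.
move=> wW w'W ww' j'j lw lw'.
have /cards1P[x Wx] : #|W :\ w :\ w'| == 1.
  have w'Ww : w' \in W :\ w by rewrite !inE eq_sym ww' w'W.
  by move: cardW; rewrite (cardsD1 w) wW (cardsD1 w' (W :\ w)) w'Ww !add1n => -[->].
have xW : x \in W by move: (set11 x); rewrite -Wx => /setD1P[_ /setD1P[_]].
have free : defect (r j') ((W :\ w) :|: (W :\ w')) = 0 by rewrite setD1U // free_other.
have := lconn_free_submod (rank_r j') z free; rewrite setD1I Wx.
rewrite (parallel_other_lconn0 _ (parallel_sym (parW xW))) //; last by apply: contraNneq zNW => <-.
by have := rank_set1_le1 (rank_r j') z; lra.
Qed.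

Lemma parallel_outside_edge3_contra : False.
Proof.
have [kappa kappaP] : exists kappa : E -> 'I_k,
    forall w, w \in W -> kappa w != j /\ 1 <= lconn (r (kappa w)) z (W :\ w).
  apply: (@fin_all_exists _ (fun=> 'I_k)
    (fun w c => w \in W -> c != j /\ 1 <= lconn (r c) z (W :\ w))) => w.
  have [wW | _] := boolP (w \in W); last by exists j.
  by have [j' j'j lj'] := other_colour wW; exists j'.
have kappa_inj : {in W &, injective kappa}.
  move=> w w' wW w'W eqk; apply/eqP/negPn/negP => ww'.
  have [kj lw] := kappaP w wW; have [_ lw'] := kappaP w' w'W.
  by apply: (other_colour_inj wW w'W ww' kj lw); rewrite eqk.
have /set0Pn[x xW] : W != set0 by rewrite -card_gt0 cardW.
have ge1 j' : j' \in j |: kappa @: W -> 1 <= lconn (r j') z W.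
  rewrite !inE => /orP[/eqP-> | /imsetP[w wW ->]].
    rewrite -(parallel_sym (parW xW)); apply: lconn_mono => //; by rewrite sub1set.
  by apply: le_trans (kappaP w wW).2 _; apply: lconn_mono => //; apply: subD1set.
have := card_mul_le_sum (fun j => lconn_ge0 (rank_r j) z W) ge1.
rewrite sum_lconn // cardsU1 card_in_imset // cardW mulr1.
have -> : j \notin kappa @: W.
  by apply/imsetP => -[w wW jw]; have := (kappaP w wW).1; rewrite -jw eqxx.
by have := card_saturating_le zNW; rewrite cardW -lez_nat; lia.
Qed.

End ParallelClassMeetingAnEdge.

Lemma saturating_edge_witness p y A : y \notin A -> p \in saturating y A ->
  [/\ y \in X p, (t p <= #|A :&: X p|)%N & exists2 v, v \in A & v \in X p].
Proof.
move=> yA; rewrite inE => /andP[yp tp]; split=> //.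
have /set0Pn[v] : A :&: X p != set0 by rewrite -card_gt0 (leq_trans (t_gt0 p)).
by rewrite inE => /andP[vA vp]; exists v.
Qed.

Lemma saturating_t_eq1 p y A : p \in saturating y A -> (#|A :&: X p| <= 1)%N -> t p = 1%N.
Proof. by rewrite inE => /andP[_ tp] le1; have := t_gt0 p; lia. Qed.

Lemma saturating_two_edges i l e y S T : i != l -> e \in X i -> e \in X l ->
  y \in X i -> y \notin X l -> S \subset X i :\ y -> (#|S| < t i)%N -> T \subset X l :\ e ->
  {in saturating y (T :|: S), forall p, p != i /\ t p = 1%N}.
Proof.
move=> il ei el yi yl sS ltS sT p pS; have := pS; rewrite inE => /andP[yp tpA].
have sSi : S \subset X i by apply: subset_trans sS (subD1set _ _).
have sTl : T \subset X l by apply: subset_trans sT (subD1set _ _).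
have TXi : T :&: X i = set0.
  apply/setP => x; rewrite !inE; apply/negbTE/andP => -[xT xi].
  have /setD1P[xe xl] := subsetP sT x xT.
  by move/eqP: il; apply; apply: (edge_of_pair_unique meet_le1 xe xi ei xl el).
have pi : p != i.
  by apply: contraTneq tpA => ->; rewrite -ltnNge setIUl TXi set0U (setIidPl sSi).
split=> //; apply: (saturating_t_eq1 pS).
have lp : l != p by apply: contraNneq yl => ->.
apply: leq_trans (edge_meet_le1 meet_le1 lp sTl).
apply/subset_leq_card/subsetP => x; rewrite !inE => /andP[/orP[xT | xS] xp].
  by rewrite xT xp.
have /setD1P[xy xi] := subsetP sS x xS.
by move/eqP: pi; case; apply: (edge_of_pair_unique meet_le1 xy xp yp xi yi).
Qed.

Definition concentrated c Y := forall j, j != c -> defect (r j) Y = 0.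

Lemma concentratedP c Y : concentrated c Y <-> excess Y <= defect (r c) Y.
Proof.
split=> [conc | le_excess].
  by rewrite -sum_defect (bigD1 c) //= big1 ?addr0.
by apply: (sum_le_term_eq0 (fun j => defect_ge0 (rank_r j) Y)); rewrite sum_defect.
Qed.

Lemma concentrated_sub c Y (Y' : {set E}) : Y' \subset Y -> concentrated c Y -> concentrated c Y'.
Proof.
move=> sY'Y conc j jc; apply/eqP; rewrite eq_le defect_ge0 // andbT -(conc j jc).
exact: defect_mono.
Qed.

Section UniformColour.
Variable i : 'I_n.

Lemma concentrated_excess1 Y : Y \subset X i -> #|Y| = (t i).+1 ->
  exists c, concentrated c Y.
Proof.
move=> sYXi cardY; have excessY : excess Y = 1 by rewrite (excess_sub_edge sYXi) cardY subSnn.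
have [c defc] : exists c, 0 < defect (r c) Y.
  by apply: exists_sum_gt0 => [j|]; rewrite ?defect_ge0 // sum_defect excessY.
by exists c; apply/concentratedP; rewrite excessY.
Qed.

Lemma concentrated_merge c a b Y : Y \subset X i -> a \in Y -> b \in Y -> a != b ->
  ((t i).+2 <= #|Y|)%N -> concentrated c (Y :\ a) -> concentrated c (Y :\ b) ->
  concentrated c Y.
Proof.
move=> sYXi aY bY ab leY /concentratedP concA /concentratedP concB.
have sYa : Y :\ a \subset X i by apply: subset_trans sYXi; apply: subD1set.
have sYb : Y :\ b \subset X i by apply: subset_trans sYXi; apply: subD1set.
have sYab : Y :\ a :\ b \subset X i by apply: subset_trans sYa; apply: subD1set.
apply/concentratedP; have := defect_supermod (rank_r c) (Y :\ a) (Y :\ b).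
rewrite setD1U // setD1I; have := defect_le_excess c (Y :\ a :\ b).
move: concA concB.
rewrite (excess_sub_edge sYXi) (excess_sub_edge sYa) (excess_sub_edge sYb) (excess_sub_edge sYab).
have := cardsD1 a Y; have := cardsD1 b Y; have := cardsD1 b (Y :\ a).
rewrite !inE aY bY eq_sym ab /=; lia.
Qed.

(* Removing any of three points of Y leaves a concentrated set; two of the three colours
   coincide, as otherwise the total defect of Y would exceed its excess. *)
Lemma concentrated_exists Y : Y \subset X i -> (t i < #|Y|)%N ->
  exists c, concentrated c Y.
Proof.
move=> sYXi ltY; have [m cardY] : exists m, #|Y| = (t i + m).+1.
  by exists (#|Y| - (t i).+1)%N; lia.
elim: m Y sYXi cardY {ltY} => [|m IHm] Y sYXi cardY.
  by apply: concentrated_excess1; rewrite // cardY addn0.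
have /card_gt2P[a [b [z [[aY bY zY] [ab bz za]]]]] : (2 < #|Y|)%N.
  by have := t_gt0 i; rewrite cardY; lia.
have step w : w \in Y -> exists2 c, concentrated c (Y :\ w) & excess Y - 1 <= defect (r c) Y.
  move=> wY; have sYw : Y :\ w \subset X i by apply: subset_trans sYXi; apply: subD1set.
  have cardYw : #|Y :\ w| = (t i + m).+1 by move: cardY; rewrite (cardsD1 w) wY; lia.
  have [c concw] := IHm _ sYw cardYw; exists c => //.
  have := defect_mono (rank_r c) (subD1set Y w); move/concentratedP: concw.
  by rewrite (excess_sub_edge sYw) (excess_sub_edge sYXi) cardYw cardY; lia.
have [ca concA geA] := step a aY; have [cb concB geB] := step b bY.
have [cz concZ geZ] := step z zY.
have leY : ((t i).+2 <= #|Y|)%N by rewrite cardY; lia.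
have merge c w w' : w \in Y -> w' \in Y -> w != w' ->
    concentrated c (Y :\ w) -> concentrated c (Y :\ w') -> exists c, concentrated c Y.
  by move=> wY w'Y ww' cw cw'; exists c; apply: (concentrated_merge sYXi wY w'Y ww').
have [eab | cab] := eqVneq ca cb; first by apply: (merge cb a b) => //; rewrite -eab.
have [ebz | cbz] := eqVneq cb cz; first by apply: (merge cz b z) => //; rewrite -ebz.
have [eza | cza] := eqVneq cz ca; first by apply: (merge ca z a) => //; rewrite -eza.
have geC j : j \in [set ca; cb; cz] -> excess Y - 1 <= defect (r j) Y.
  by rewrite !inE => /orP[/orP[]|] /eqP->.
have := card_mul_le_sum (fun j => defect_ge0 (rank_r j) Y) geC.
rewrite sum_defect (excess_sub_edge sYXi) cardY setUC cardsU1 cards2 !inE.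
by rewrite cab (negbTE cza) eq_sym (negbTE cbz); lia.
Qed.

Definition uniform_colour c := forall S y, S \subset X i -> #|S| = t i ->
  y \in X i -> y \notin S -> lconn (r c) y S = 1.

Lemma uniform_colour_exists : (t i < #|X i|)%N -> exists c, uniform_colour c.
Proof.
move=> ltXi; have [c conc] := concentrated_exists (subxx _) ltXi.
exists c => S y sS cardS yXi yS.
have sSy : y |: S \subset X i by rewrite subUset sub1set yXi sS.
have defS j : defect (r j) S = 0.
  apply/eqP; rewrite eq_le defect_ge0 // andbT.
  by have := defect_le_excess j S; rewrite (excess_sub_edge sS) cardS subnn.
apply/eqP; rewrite eq_le lconn_le1 //=.
have := (concentratedP c _).1 (concentrated_sub sSy conc).
by rewrite defect_setU1 // defS add0r (excess_sub_edge sSy) cardsU1 yS cardS subSnn.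
Qed.

Lemma uniform_colour_full c : t i = #|X i| -> uniform_colour c.
Proof.
move=> tXi S y sS cardS yXi yS; have SXi : S = X i.
  by apply/eqP; rewrite eqEcard sS cardS tXi leqnn.
by rewrite SXi yXi in yS.
Qed.

End UniformColour.

Lemma exists_uniform_colouring : (forall i, X i != set0) -> (forall i, t i <= #|X i|)%N ->
  exists c : 'I_n -> 'I_k, forall i, uniform_colour i (c i).
Proof.
move=> Xne tle; apply: fin_all_exists => i.
have [ltXi | geXi] := ltnP (t i) #|X i|; first exact: uniform_colour_exists.
have /set0Pn[x xXi] := Xne i.
have k_gt0 : (0 < k)%N.
  by apply: leq_trans (hdeg_le x); rewrite /hdeg card_gt0; apply/set0Pn; exists i; rewrite inE.
by exists (Ordinal k_gt0); apply: uniform_colour_full; apply/eqP; rewrite eqn_leq tle.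
Qed.

Section EdgeColouring.
Variable c : 'I_n -> 'I_k.
Hypothesis c_uniform : forall i, uniform_colour i (c i).
Hypothesis t1_or_lt : forall i, t i = 1%N \/ (t i < #|X i|)%N.
Hypothesis no_triangle : no_pair_triangle X.

Lemma parallel_in_edge i x y : t i = 1%N -> x \in X i -> y \in X i -> x != y ->
  parallel (r (c i)) x y.
Proof. by move=> ti xi yi xy; apply: c_uniform; rewrite ?sub1set ?cards1 ?inE // eq_sym. Qed.

Lemma parallel_outside_big_edge_contra m x z : t m = 1%N -> (2 < #|X m|)%N ->
  x \in X m -> z \notin X m -> parallel (r (c m)) z x -> False.
Proof.
move=> tm bigm xm zm pzx; have [W sWm cardW] := exists_subset_card bigm.
apply: (parallel_outside_edge3_contra tm sWm cardW zm) => w wW.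
have [-> | wx] := eqVneq w x; first exact: pzx.
have xw : x != w by rewrite eq_sym wx.
by have := parallel_trans (rank_r _) pzx (parallel_in_edge tm xm (subsetP sWm w wW) xw).
Qed.

Lemma edge_colour_neq_t1_t1 m m' y : m != m' -> t m = 1%N -> t m' = 1%N ->
  (1 < #|X m|)%N -> (1 < #|X m'|)%N -> y \in X m -> y \in X m' -> c m != c m'.
Proof.
move=> mm' tm tm' bigm bigm' ym ym'; apply/eqP => cmm'.
have [a am ay] := exists_other y bigm; have [b bm' b_y] := exists_other y bigm'.
have pya : parallel (r (c m)) y a by apply: parallel_in_edge; rewrite // eq_sym.
have pyb : parallel (r (c m)) y b by rewrite cmm'; apply: parallel_in_edge; rewrite // eq_sym.
have pab := parallel_trans (rank_r _) (parallel_sym pya) pyb.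
have am' : a \notin X m'.
  by apply: contraNN mm' => am'; apply/eqP; apply: (edge_of_pair_unique meet_le1 ay).
have bm : b \notin X m.
  by apply: contraNN mm' => bm; apply/eqP; apply: (edge_of_pair_unique meet_le1 b_y).
have ab : a != b by apply: contraNneq am' => ->.
have [L [tL aL bL]] := parallel_edge ab pab.
have cL : c L = c m := parallel_colour_unique ab (parallel_in_edge tL aL bL ab) pab.
have yL : y \notin X L.
  apply: contraNN bm => yL.
  by rewrite -(edge_of_pair_unique meet_le1 ay aL yL am ym).
have small p x z : t p = 1%N -> x \in X p -> z \notin X p -> parallel (r (c p)) z x ->
    (#|X p| <= 2)%N.
  move=> tp xp zp pzx; rewrite leqNgt; apply/negP => bigp.
  exact: (parallel_outside_big_edge_contra tp bigp xp zp pzx).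
apply: no_triangle; exists y, a, b.
split; [by rewrite eq_sym | by rewrite eq_sym | exact: ab | split].
- exists m; apply: set2_card_le2; rewrite 1?eq_sym //.
  exact: (small m y b tm ym bm (parallel_sym pyb)).
- exists m'; apply: set2_card_le2; rewrite 1?eq_sym //.
  by apply: (small m' y a tm' ym' am'); rewrite -cmm'; apply: parallel_sym.
- exists L; apply: set2_card_le2 => //.
  by apply: (small L a y tL aL yL); rewrite cL.
Qed.

(* Colour j and the pairwise distinct colours c p of the saturating hyperedges all span y:
   one more than [sum_lconn] allows. *)
Lemma saturating_colours_contra j y A : y \notin A -> lconn (r j) y A = 1 ->
  {in saturating y A, forall p, t p = 1%N /\ c p != j} -> False.
Proof.
move=> yA lyA satP.
have satP' p : p \in saturating y A ->
    [/\ y \in X p, (1 < #|X p|)%N & 1 <= lconn (r (c p)) y A].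
  move=> pS; have [tp1 _] := satP p pS.
  have [yp _ [v vA vp]] := saturating_edge_witness yA pS.
  have vy : v != y by apply: contraNneq yA => <-.
  split=> //; first by apply/card_gt1P; exists v, y.
  rewrite -(parallel_in_edge tp1 vp yp vy); apply: lconn_mono => //.
  by rewrite sub1set.
have c_inj : {in saturating y A &, injective c}.
  move=> p p' pS p'S cpp'; apply/eqP/negPn/negP => pp'.
  have [yp bigp _] := satP' p pS; have [yp' bigp' _] := satP' p' p'S.
  have := edge_colour_neq_t1_t1 pp' (satP p pS).1 (satP p' p'S).1 bigp bigp' yp yp'.
  by rewrite cpp' eqxx.
have ge1 j' : j' \in j |: c @: saturating y A -> 1 <= lconn (r j') y A.
  rewrite !inE => /orP[/eqP-> | /imsetP[p pS ->]]; first by rewrite lyA.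
  by case: (satP' p pS).
have := card_mul_le_sum (fun j => lconn_ge0 (rank_r j) y A) ge1.
rewrite sum_lconn // cardsU1 card_in_imset // mulr1.
have -> : j \notin c @: saturating y A.
  by apply/imsetP => -[p pS jp]; have := (satP p pS).2; rewrite -jp eqxx.
by rewrite lez_nat add1n ltnn.
Qed.


Lemma edge_colour_neq_t2_t1 i m y : (1 < t i)%N -> t m = 1%N -> (1 < #|X m|)%N ->
  y \in X i -> y \in X m -> c i != c m.
Proof.
move=> ti tm bigm yi ym; apply/eqP => cim.
have ltXi : (t i < #|X i|)%N by case: (t1_or_lt i) => // ti1; rewrite ti1 in ti.
have [z zm zy] := exists_other y bigm.
have zi : z \notin X i.
  apply: contraTN ti => zi; rewrite -leqNgt.
  by rewrite (edge_of_pair_unique meet_le1 zy zi yi zm ym) tm.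
have [S sS cardS] : exists2 S : {set E}, S \subset X i :\ y & #|S| = t i.
  by apply: exists_subset_card; rewrite (cardsD1 y) yi in ltXi.
have sSi : S \subset X i by apply: subset_trans sS (subD1set _ _).
have yS : y \notin S by apply: contraTN isT => /(subsetP sS); rewrite setD11.
have zS : z \notin S by apply: contraNN zi => /(subsetP sSi).
have pyz : parallel (r (c i)) y z by rewrite cim; apply: parallel_in_edge; rewrite // eq_sym.
have lzS : lconn (r (c i)) z S = 1.
  apply: (lconn_trans (rank_r _) (c_uniform sSi cardS yi yS)).
  exact: (lconn_eq1_mono (rank_r _) (subsetUl [set y] S) pyz).
apply: (saturating_colours_contra zS lzS) => p pS.
have [zp _ [s sS' sp]] := saturating_edge_witness zS pS.
have pi : p != i by apply: contraNneq zi => <-.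
have tp : t p = 1%N.
  by apply: (saturating_t_eq1 pS); apply: (edge_meet_le1 meet_le1 _ sSi); rewrite eq_sym.
split=> //; apply/eqP => cpi.
have sz : s != z by apply: contraNneq zS => <-.
have sy : s != y by apply: contraNneq yS => <-.
have psz : parallel (r (c i)) s z by rewrite -cpi; apply: parallel_in_edge.
have [L [tL sL yL]] := parallel_edge sy (parallel_trans (rank_r _) psz (parallel_sym pyz)).
have eLi := edge_of_pair_unique meet_le1 sy sL yL (subsetP sSi s sS') yi.
by rewrite -eLi tL in ti.
Qed.

(* T spans e and e + S spans y in colour c i = c l, so T :|: S spans y although it
   meets X i in fewer than t i points. *)
Lemma edge_colour_neq_t2_t2 i l e : i != l -> (1 < t i)%N -> (1 < t l)%N ->
  e \in X i -> e \in X l -> c i != c l.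
Proof.
move=> il ti tl ei el; apply/eqP => cil.
have lt_t p : (1 < t p)%N -> (t p < #|X p|)%N by case: (t1_or_lt p) => // ->.
have [y yi ye] := exists_other e (ltn_trans ti (lt_t i ti)).
have yl : y \notin X l.
  by apply: contraNN il => yl; apply/eqP; apply: (edge_of_pair_unique meet_le1 ye).
have [S sS cardS] : exists2 S : {set E}, S \subset X i :\ y :\ e & #|S| = (t i).-1.
  apply: exists_subset_card; have := lt_t i ti.
  by rewrite (cardsD1 y (X i)) yi (cardsD1 e (X i :\ y)) !inE eq_sym ye ei; lia.
have [T sT cardT] : exists2 T : {set E}, T \subset X l :\ e & #|T| = t l.
  by apply: exists_subset_card; have := lt_t l tl; rewrite (cardsD1 e (X l)) el; lia.
have sSy : S \subset X i :\ y by apply: subset_trans sS (subD1set _ _).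
have sSi : S \subset X i by apply: subset_trans sSy (subD1set _ _).
have eS : e \notin S by apply: contraTN isT => /(subsetP sS); rewrite setD11.
have yS : y \notin S by apply: contraTN isT => /(subsetP sSy); rewrite setD11.
have eT : e \notin T by apply: contraTN isT => /(subsetP sT); rewrite setD11.
have yT : y \notin T by apply: contraNN yl => /(subsetP (subset_trans sT (subD1set _ _))).
have leA : lconn (r (c i)) e (T :|: S) = 1.
  apply: (lconn_eq1_mono (rank_r _) (subsetUl T S)); rewrite cil.
  by apply: c_uniform; rewrite // (subset_trans sT (subD1set _ _)).
have lyeA : lconn (r (c i)) y (e |: (T :|: S)) = 1.
  apply: (lconn_eq1_mono (rank_r _) (setUS _ (subsetUr T S))).
  apply: c_uniform; rewrite ?subUset ?sub1set ?ei ?cardsU1 ?eS ?cardS //.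
    by rewrite add1n prednK // ltnW.
  by rewrite !inE negb_or yS ye.
have yA : y \notin T :|: S by rewrite inE negb_or yT.
apply: (saturating_colours_contra yA (lconn_trans (rank_r _) leA lyeA)) => p pS.
have ltS : (#|S| < t i)%N by rewrite cardS ltn_predL t_gt0.
have [pi tp] := saturating_two_edges il ei el yi yl sSy ltS sT pS.
have [yp _ [v vA vp]] := saturating_edge_witness yA pS.
split=> //; rewrite eq_sym.
have vy : v != y by apply: contraNneq yA => <-.
by apply: (edge_colour_neq_t2_t1 ti tp _ yi yp); apply/card_gt1P; exists v, y.
Qed.

Lemma edge_colour_neq i l : i != l -> (1 < #|X i|)%N -> (1 < #|X l|)%N ->
  X i :&: X l != set0 -> c i != c l.
Proof.
move=> il bigi bigl /set0Pn[y]; rewrite inE => /andP[yi yl].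
have := t_gt0 i; have := t_gt0 l.
have [ti | ti] := eqVneq (t i) 1%N; have [tl | tl] := eqVneq (t l) 1%N => tl0 ti0.
- exact: (edge_colour_neq_t1_t1 il ti tl bigi bigl yi yl).
- by rewrite eq_sym; apply: (edge_colour_neq_t2_t1 _ ti bigi yl yi); lia.
- by apply: (edge_colour_neq_t2_t1 _ tl bigl yi yl); lia.
- by apply: (edge_colour_neq_t2_t2 il _ _ yi yl); lia.
Qed.

Lemma line_graph_colorable : injective X -> (forall i, X i != set0) ->
  colorable (line_graph X) k.
Proof.
move=> Xinj Xne; apply: (@colorable_extend _ _ _ (fun i => 1 < #|X i|)%N c).
- by move=> i l; rewrite /line_graph eq_sym setIC.
- by move=> i l /andP[il meet] bigi bigl; exact: (edge_colour_neq il bigi bigl meet).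
- move=> i l /andP[il /set0Pn[x]]; rewrite inE => /andP[xi xl].
  apply/negPn/negP; rewrite negb_or -!leqNgt => /andP[smalli smalll].
  have single p : x \in X p -> (#|X p| <= 1)%N -> X p = [set x].
    by move=> xp smallp; apply/eqP; rewrite eq_sym eqEcard sub1set xp cards1.
  by move/eqP: il; apply; apply: Xinj; rewrite (single i xi smalli) (single l xl smalll).
- move=> i; rewrite -leqNgt => smalli; have /set0Pn[x xi] := Xne i.
  have Xi : X i = [set x] by apply/eqP; rewrite eq_sym eqEcard sub1set xi cards1.
  apply: leq_trans (hdeg_le x); rewrite /hdeg (cardsD1 i [set p | x \in X p]) inE xi.
  rewrite add1n ltnS; apply/subset_leq_card/subsetP => l; rewrite !inE /line_graph Xi.
  case/andP=> li /set0Pn[z]; rewrite !inE => /andP[/eqP-> xl].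
  by rewrite eq_sym li xl.
Qed.

End EdgeColouring.

End RhoAsSumOfRanks.

Lemma line_graph_colorable_of_in_Dk (E : finType) n k (X : 'I_n -> {set E}) t :
  hypergraph X -> (forall i, t i <= #|X i|)%N -> (forall i, 0 < t i)%N ->
  (forall i, t i = 1%N \/ (t i < #|X i|)%N) ->
  (forall i j, i != j -> (#|X i :&: X j| <= 1)%N) -> no_pair_triangle X ->
  in_Dk k [set: E] (rho_of X t) -> colorable (line_graph X) k.
Proof.
move=> [Xinj Xne] tle t_gt0 t1_or_lt meet_le1 no_triangle [r [rank_r rho_sum]].
have rho_sumT A : rho_of X t A = \sum_j r j A by apply: rho_sum; apply: subsetT.
have [c c_uniform] := exists_uniform_colouring rank_r rho_sumT t_gt0 meet_le1 Xne tle.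
exact: (line_graph_colorable rank_r rho_sumT t_gt0 meet_le1 c_uniform t1_or_lt no_triangle).
Qed.

Local Close Scope ring_scope.

Theorem corollary2p11 (E : finType) (n : nat) (X : 'I_n -> {set E})
  (t : 'I_n -> nat) (k : nat) :
  hypergraph X ->
  (forall i, t i <= #|X i|) ->
  (* (H1) *)
  (forall e : E, 2 <= hdeg X e) ->
  (* (H2) *)
  (forall i j, i != j -> #|X i :&: X j| <= 1) ->
  (* (H3) *)
  ~ (exists a b c : E, [/\ a != b, a != c, b != c &
       [/\ exists i, X i = [set a; b], exists i, X i = [set a; c]
         & exists i, X i = [set b; c]]]) ->
  (* (T) *)
  (forall i, t i = 1 \/
     ((exists2 e, e \in X i & hdeg X e <= t i) /\ t i < #|X i|)) ->
  critical (line_graph X) k ->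
  excluded_minor_Dk k (rho_of X t).
Proof.
move=> hyp tle deg_ge2 meet_le1 no_triangle tT [[_ not_k] crit].
have t_gt0 i : 0 < t i.
  by case: (tT i) => [-> // | [[e _ le_e] _]]; have := deg_ge2 e; lia.
have t1_or_lt i : t i = 1 \/ t i < #|X i| by case: (tT i) => [| []]; [left | right].
split.
- exact: polymatroid_rho_of.
- move/(line_graph_colorable_of_in_Dk hyp tle t_gt0 t1_or_lt meet_le1 no_triangle).
  exact: not_k.
- move=> A B _ nonempty; apply: minor_rho_of_in_Dk => // u v uv.
  by have [] := crit u v uv.
Qed.
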